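(* Let $Y=\ell_1^N$ (real or complex) and let $m$ be a positive integer. For $j_1,\dots,j_m\in\{1,\dots,N\}$ (not necessarily distinct) define the $m$-homogeneous polynomial $$Q_{j_1,\dots,j_m}(x)=\prod_{k=1}^m e^*_{j_k}(x)+\Big[\sum_{j\in\{j_1,\dots,j_m\}}e^*_j(x)\Big]^m,$$ where the sum runs over the set $\{j_1,\dots,j_m\}$ (each distinct index once). Then $x\in B_Y$ satisfies $|Q_{j_1,\dots,j_m}(x)|=\|Q_{j_1,\dots,j_m}\|$ if and only if $x=\frac{c}{m}\sum_{k=1}^me_{j_k}$ for some scalar $c$ with $|c|=1$. Consequently $Q_{j_1,\dots,j_m}$ strongly attains its norm at $\frac1m\sum_{k=1}^me_{j_k}$.
   Context: $\{e_j\}$ is the canonical basis of $\ell_1^N$ and $\{e_j^*\}$ the coordinate functionals. The norm of a polynomial $P$ is $\|P\|=\sup_{x\in B_Y}|P(x)|$. A nonzero $P$ strongly attains its norm at $x\in B_Y$ if for every sequence $\{x_n\}\subset B_Y$ with $|P(x_n)|\to\|P\|$ there are a scalar $\lambda$ with $|\lambda|=1$ and a subsequence of $\{x_n\}$ converging to $\lambda x$. *)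

From Stdlib Require Import Reals Lra List Arith.
Open Scope R_scope.

Definition Cx : Type := (R * R)%type.
Definition Czero : Cx := (0, 0).
Definition Cone : Cx := (1, 0).
Definition RtoC (r : R) : Cx := (r, 0).
Definition Cadd (z w : Cx) : Cx := (fst z + fst w, snd z + snd w).
Definition Cmul (z w : Cx) : Cx :=
  (fst z * fst w - snd z * snd w, fst z * snd w + snd z * fst w).
Definition Csub (z w : Cx) : Cx := (fst z - fst w, snd z - snd w).
Fixpoint Cpow (z : Cx) (n : nat) : Cx :=
  match n with O => Cone | S n' => Cmul z (Cpow z n') end.
Definition Cmod (z : Cx) : R := sqrt (fst z * fst z + snd z * snd z).

(* Scalar field selector: [is_real = true] means the real case (K = R),
   [is_real = false] means the complex case (K = Cx). *)
Definition scalar (is_real : bool) (z : Cx) : Prop :=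
  if is_real then snd z = 0 else True.

Definition vec : Type := nat -> Cx.

Definition inY (is_real : bool) (N : nat) (x : vec) : Prop :=
  (forall j, scalar is_real (x j)) /\ (forall j, (N <= j)%nat -> x j = Czero).

Fixpoint sumR (n : nat) (f : nat -> R) : R :=
  match n with O => 0 | S n' => sumR n' f + f n' end.

Definition l1norm (N : nat) (x : vec) : R := sumR N (fun j => Cmod (x j)).

Definition inB (is_real : bool) (N : nat) (x : vec) : Prop :=
  inY is_real N x /\ l1norm N x <= 1.

Definition vscale (c : Cx) (x : vec) : vec := fun j => Cmul c (x j).
Definition vsub (x y : vec) : vec := fun j => Csub (x j) (y j).

Definition pnorm_is (is_real : bool) (N : nat) (P : vec -> Cx) (r : R) : Prop :=
  is_lub (fun t => exists y, inB is_real N y /\ t = Cmod (P y)) r.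

Definition strongly_attains (is_real : bool) (N : nat) (P : vec -> Cx) (x : vec) : Prop :=
  (exists y, inY is_real N y /\ P y <> Czero) /\
  inB is_real N x /\
  forall r, pnorm_is is_real N P r ->
  forall xs : nat -> vec,
    (forall n, inB is_real N (xs n)) ->
    Un_cv (fun n => Cmod (P (xs n))) r ->
    exists lam : Cx, scalar is_real lam /\ Cmod lam = 1 /\
    exists phi : nat -> nat, (forall n, (phi n < phi (S n))%nat) /\
      Un_cv (fun n => l1norm N (vsub (xs (phi n)) (vscale lam x))) 0.

(* e_j^*(x) = x j ;  js = [j_1; ...; j_m] (0-based indices) *)
Definition Cprod_list (l : list Cx) : Cx := fold_right Cmul Cone l.
Definition Csum_list (l : list Cx) : Cx := fold_right Cadd Czero l.

Definition Q (js : list nat) (x : vec) : Cx :=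
  Cadd (Cprod_list (map x js))
       (Cpow (Csum_list (map x (nodup Nat.eq_dec js))) (length js)).

(* (c/m) * sum_k e_{j_k} : coordinate i equals c * (#{k | j_k = i}) / m *)
Definition target (js : list nat) (c : Cx) : vec :=
  fun i => Cmul c (RtoC (INR (count_occ Nat.eq_dec js i) / INR (length js))).

(* Write w_i = (multiplicity of i in j_1..j_m)/m and Pstar = prod_k w_{j_k}.
   - A weighted AM-GM inequality, proved from the tangent bound u <= w e^(u/w - 1),
     gives prod_k |x_{j_k}| <= Pstar whenever sum_{i distinct} |x_i| <= 1, with
     equality only for |x_i| = w_i.  Hence ||Q|| = 1 + Pstar, attained at the target.
   - At a norming point both terms are extremal: |sum_i x_i| = 1 and |x_i| = w_i.
     Then x vanishes off {j_k} (the l1 norm is exhausted), and the equality case of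
     the triangle inequality aligns all x_i with one phase c.
   - Strong attainment: B_Y is sequentially compact coordinatewise (Bolzano-Weierstrass)
     and Q is continuous, so a maximizing sequence has a subsequence converging to a
     norming point, i.e. to c times the target. *)
From Stdlib Require Import Reals Lra Lia Psatz List Arith Rtopology ClassicalEpsilon FunctionalExtensionality.
Open Scope R_scope.

(** * Complex scalars *)

Lemma Cx_eq (z w : Cx) : fst z = fst w -> snd z = snd w -> z = w.
Proof. destruct z, w; simpl; intros; subst; reflexivity. Qed.

Lemma Cring_th :
  ring_theory Czero Cone Cadd Cmul Csub (fun z => (- fst z, - snd z)) (@eq Cx).
Proof.
  constructor; intros; apply Cx_eq; unfold Cadd, Cmul, Csub, Czero, Cone; simpl; ring.
Qed.
Add Ring Cring : Cring_th.

Definition Cconj (z : Cx) : Cx := (fst z, - snd z).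

Lemma Cmod_ge0 z : 0 <= Cmod z.
Proof. apply sqrt_pos. Qed.

Lemma Cmod_sq z : Cmod z * Cmod z = fst z * fst z + snd z * snd z.
Proof. unfold Cmod. apply sqrt_sqrt. nra. Qed.

Lemma Cmod_mul z w : Cmod (Cmul z w) = Cmod z * Cmod w.
Proof. unfold Cmod, Cmul; simpl. rewrite <- sqrt_mult_alt by nra. f_equal. ring. Qed.

Lemma Cmod_RtoC r : Cmod (RtoC r) = Rabs r.
Proof. unfold Cmod, RtoC; simpl. rewrite <- sqrt_Rsqr_abs. unfold Rsqr. f_equal; ring. Qed.

Lemma Cmod_Cone : Cmod Cone = 1.
Proof. rewrite <- (Rabs_R1), <- Cmod_RtoC. reflexivity. Qed.

Lemma Cmod_pow z n : Cmod (Cpow z n) = Cmod z ^ n.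
Proof. induction n; simpl; [apply Cmod_Cone | rewrite Cmod_mul, IHn; ring]. Qed.

Lemma Cmod_Cconj z : Cmod (Cconj z) = Cmod z.
Proof. unfold Cmod, Cconj; simpl. f_equal; ring. Qed.

Lemma Cmod_eq0 z : Cmod z = 0 -> z = Czero.
Proof. intros H. pose proof (Cmod_sq z). rewrite H in H0. destruct z; apply Cx_eq; simpl in *; nra. Qed.

(* Cauchy–Schwarz in R^2: the real part of conj(z) w is at most |z| |w|. *)
Lemma re_conj_mul_le z w : fst (Cmul (Cconj z) w) <= Cmod z * Cmod w.
Proof.
  pose proof (Cmod_sq z); pose proof (Cmod_sq w); pose proof (Cmod_ge0 z); pose proof (Cmod_ge0 w).
  destruct (Rle_dec (fst (Cmul (Cconj z) w)) 0); [nra|].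
  apply Rsqr_incr_0_var; [unfold Rsqr | nra].
  destruct z as [a b], w as [c d]; unfold Cmul, Cconj in *; simpl in *.
  replace (Cmod (a, b) * Cmod (c, d) * (Cmod (a, b) * Cmod (c, d)))
    with (Cmod (a, b) * Cmod (a, b) * (Cmod (c, d) * Cmod (c, d))) by ring.
  rewrite H, H0. pose proof (Rle_0_sqr (a * d - b * c)). unfold Rsqr in *. nra.
Qed.

Lemma Cmod_fst z : fst z <= Cmod z.
Proof. pose proof (re_conj_mul_le Cone z). rewrite Cmod_Cone in H. unfold Cmul in H; simpl in H; lra. Qed.

Lemma Cmod_triangle z w : Cmod (Cadd z w) <= Cmod z + Cmod w.
Proof.
  pose proof (re_conj_mul_le z w); pose proof (Cmod_sq z); pose proof (Cmod_sq w).
  pose proof (Cmod_sq (Cadd z w)); pose proof (Cmod_ge0 z); pose proof (Cmod_ge0 w).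
  apply Rsqr_incr_0_var; [| nra]. unfold Rsqr. rewrite H2.
  destruct z as [a b], w as [c d]; unfold Cadd, Cmul, Cconj in *; simpl in *. nra.
Qed.

Lemma Cmod_fst_abs z : Rabs (fst z) <= Cmod z.
Proof.
  pose proof (Cmod_sq z); pose proof (Cmod_ge0 z).
  apply Rsqr_incr_0_var; [rewrite <- Rsqr_abs; unfold Rsqr; nra | lra].
Qed.

Lemma Cmod_snd_abs z : Rabs (snd z) <= Cmod z.
Proof.
  pose proof (Cmod_sq z); pose proof (Cmod_ge0 z).
  apply Rsqr_incr_0_var; [rewrite <- Rsqr_abs; unfold Rsqr; nra | lra].
Qed.

Lemma aligned_with_phase s x :
  Cmod s = 1 -> fst (Cmul (Cconj s) x) = Cmod x -> x = Cmul s (RtoC (Cmod x)).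
Proof.
  intros Hs Hre.
  pose proof (Cmod_sq s) as Hs2; rewrite Hs in Hs2.
  pose proof (Cmod_sq (Cmul (Cconj s) x)) as Hw2.
  rewrite Cmod_mul, Cmod_Cconj, Hs, Rmult_1_l, <- Hre in Hw2.
  assert (Him : snd (Cmul (Cconj s) x) = 0) by nra.
  rewrite <- Hre.
  destruct s as [c1 c2], x as [x1 x2]; unfold Cmul, Cconj, RtoC in *; simpl in *.
  assert (H1 : c1 * x2 = c2 * x1) by lra.
  pose proof (f_equal (Rmult c2) H1); pose proof (f_equal (Rmult c1) H1).
  pose proof (f_equal (Rmult x1) Hs2); pose proof (f_equal (Rmult x2) Hs2).
  apply Cx_eq; simpl; lra.
Qed.

(** * Finite sums and products *)

Definition sumL (l : list nat) (f : nat -> R) : R := fold_right (fun j acc => f j + acc) 0 l.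
Definition prodL (l : list nat) (f : nat -> R) : R := fold_right (fun j acc => f j * acc) 1 l.

Lemma sumL_ext l f g : (forall i, In i l -> f i = g i) -> sumL l f = sumL l g.
Proof. induction l; simpl; intros; auto. rewrite H, IHl; auto. Qed.

Lemma sumL_plus l f g : sumL l (fun i => f i + g i) = sumL l f + sumL l g.
Proof. induction l; simpl; lra. Qed.

Lemma sumL_scal l c f : sumL l (fun i => c * f i) = c * sumL l f.
Proof. induction l; simpl; lra. Qed.

Lemma sumL_one l : sumL l (fun _ => 1) = INR (length l).
Proof. induction l; simpl length; [reflexivity |]. rewrite S_INR. simpl. lra. Qed.

Lemma sumL_le l f g : (forall i, In i l -> f i <= g i) -> sumL l f <= sumL l g.
Proof.
  induction l; simpl; intros H; [lra|].
  pose proof (H a (or_introl eq_refl)); pose proof (IHl (fun i h => H i (or_intror h))). lra.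
Qed.

Lemma sumL_eq_termwise l f g : (forall i, In i l -> f i <= g i) -> sumL l f = sumL l g ->
  forall i, In i l -> f i = g i.
Proof.
  induction l; simpl; intros Hle Heq i Hi; [contradiction|].
  pose proof (Hle a (or_introl eq_refl)).
  pose proof (sumL_le l f g (fun i h => Hle i (or_intror h))).
  destruct Hi; [subst; lra | apply IHl; auto; lra].
Qed.

Lemma sumL_delta L a g : NoDup L ->
  sumL L (fun i => (if Nat.eq_dec a i then 1 else 0) * g i) = if in_dec Nat.eq_dec a L then g a else 0.
Proof.
  induction L; simpl; intros HL; auto.
  inversion HL; subst. rewrite IHL by auto.
  destruct (Nat.eq_dec a0 a); destruct (in_dec Nat.eq_dec a L); destruct (Nat.eq_dec a a0);
    subst; try tauto; lra.
Qed.

Lemma sumL_count l g :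
  sumL l g = sumL (nodup Nat.eq_dec l) (fun i => INR (count_occ Nat.eq_dec l i) * g i).
Proof.
  induction l as [|a l IHl]; [reflexivity|].
  assert (Hsplit : sumL (nodup Nat.eq_dec l) (fun i => INR (count_occ Nat.eq_dec (a :: l) i) * g i)
     = sumL (nodup Nat.eq_dec l) (fun i => INR (count_occ Nat.eq_dec l i) * g i)
       + (if in_dec Nat.eq_dec a (nodup Nat.eq_dec l) then g a else 0)).
  { rewrite <- sumL_delta by apply NoDup_nodup. rewrite <- sumL_plus. apply sumL_ext; intros.
    simpl. destruct (Nat.eq_dec a i); [rewrite S_INR|]; ring. }
  rewrite <- IHl in Hsplit. simpl nodup. simpl sumL at 1.
  destruct (in_dec Nat.eq_dec a l) as [Ha|Ha].
  - rewrite Hsplit. destruct (in_dec _ a _) as [|Hn]; [ring | exfalso; apply Hn, nodup_In, Ha].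
  - change (sumL (a :: ?L) ?f) with (f a + sumL L f). rewrite Hsplit.
    destruct (in_dec _ a _) as [Hn|]; [exfalso; apply Ha, (nodup_In Nat.eq_dec), Hn|].
    simpl. rewrite (proj1 (count_occ_not_In Nat.eq_dec l a)) by auto.
    destruct (Nat.eq_dec a a); [simpl; ring | tauto].
Qed.

Lemma prodL_nonneg l f : (forall i, In i l -> 0 <= f i) -> 0 <= prodL l f.
Proof. induction l; simpl; intros; [lra | apply Rmult_le_pos; auto]. Qed.

Lemma prodL_pos l f : (forall i, In i l -> 0 < f i) -> 0 < prodL l f.
Proof. induction l; simpl; intros; [lra | apply Rmult_lt_0_compat; auto]. Qed.

Lemma prodL_le l f g : (forall i, In i l -> 0 <= f i <= g i) -> prodL l f <= prodL l g.
Proof.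
  induction l; simpl; intros H; [lra|].
  pose proof (H a (or_introl eq_refl)).
  assert (prodL l f <= prodL l g) by auto.
  assert (0 <= prodL l f) by (apply prodL_nonneg; intros; apply H; auto). nra.
Qed.

Lemma prodL_eq_termwise l f g : (forall i, In i l -> 0 <= f i <= g i) ->
  (forall i, In i l -> 0 < g i) -> prodL l f = prodL l g -> forall i, In i l -> f i = g i.
Proof.
  induction l; simpl; intros Hle Hpos Heq i Hi; [contradiction|].
  pose proof (Hle a (or_introl eq_refl)); pose proof (Hpos a (or_introl eq_refl)).
  assert (prodL l f <= prodL l g) by (apply prodL_le; auto).
  assert (0 <= prodL l f) by (apply prodL_nonneg; intros; apply Hle; auto).
  assert (0 < prodL l g) by (apply prodL_pos; auto).
  assert (Ha : f a = g a) by (destruct (Req_dec (f a) (g a)); auto; nra).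
  assert (Hrest : prodL l f = prodL l g).
  { rewrite Ha in Heq. apply Rmult_eq_reg_l in Heq; lra. }
  destruct Hi; subst; auto.
Qed.

Lemma prodL_mult l f g : prodL l (fun i => f i * g i) = prodL l f * prodL l g.
Proof. induction l; simpl; [lra | rewrite IHl; ring]. Qed.

Lemma prodL_exp l f : prodL l (fun i => exp (f i)) = exp (sumL l f).
Proof. induction l; simpl; [rewrite exp_0 | rewrite IHl, exp_plus]; auto. Qed.

Lemma sumR_ext n f g : (forall i, (i < n)%nat -> f i = g i) -> sumR n f = sumR n g.
Proof. induction n; simpl; intros; auto. rewrite IHn, H; auto. Qed.

Lemma sumR_plus n f g : sumR n (fun i => f i + g i) = sumR n f + sumR n g.
Proof. induction n; simpl; lra. Qed.

Lemma sumR_zero n : sumR n (fun _ => 0) = 0.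
Proof. induction n; simpl; lra. Qed.

Lemma sumR_nonneg n f : (forall i, (i < n)%nat -> 0 <= f i) -> 0 <= sumR n f.
Proof. induction n; simpl; intros H; [lra|]. pose proof (H n ltac:(lia)). assert (0 <= sumR n f) by auto. lra. Qed.

Lemma sumR_term_le n f j : (forall i, (i < n)%nat -> 0 <= f i) -> (j < n)%nat -> f j <= sumR n f.
Proof.
  induction n; simpl; intros H Hj; [lia|].
  destruct (Nat.eq_dec j n).
  - subst. assert (0 <= sumR n f) by (apply sumR_nonneg; auto). lra.
  - assert (f j <= sumR n f) by (apply IHn; auto; lia). pose proof (H n ltac:(lia)). lra.
Qed.

Lemma sumR_delta n a g : (a < n)%nat -> sumR n (fun i => if Nat.eq_dec i a then g i else 0) = g a.
Proof.
  induction n; simpl; intros; [lia|].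
  destruct (Nat.eq_dec n a).
  - subst. rewrite (sumR_ext _ _ (fun _ => 0)), sumR_zero; [lra|].
    intros; destruct (Nat.eq_dec i a); [lia | lra].
  - rewrite IHn by lia. lra.
Qed.

Lemma sumR_split N L f : NoDup L -> Forall (fun j => (j < N)%nat) L ->
  sumR N f = sumL L f + sumR N (fun i => if in_dec Nat.eq_dec i L then 0 else f i).
Proof.
  induction L as [|a L IHL]; intros HL HN.
  - simpl. rewrite Rplus_0_l. apply sumR_ext. reflexivity.
  - inversion HL; inversion HN; subst. rewrite IHL by auto. simpl sumL.
    rewrite (sumR_ext N (fun i => if in_dec Nat.eq_dec i L then 0 else f i)
       (fun i => (if in_dec Nat.eq_dec i (a :: L) then 0 else f i) + (if Nat.eq_dec i a then f i else 0))).
    + rewrite sumR_plus, sumR_delta by auto. ring.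
    + intros i _. destruct (in_dec Nat.eq_dec i (a :: L)) as [h|h]; destruct (in_dec Nat.eq_dec i L);
        destruct (Nat.eq_dec i a); subst; simpl in h;
        first [lra | tauto | (exfalso; destruct h; congruence) | (exfalso; apply h; simpl; tauto)].
Qed.

Lemma Cmod_prod (x : vec) l : Cmod (Cprod_list (map x l)) = prodL l (fun j => Cmod (x j)).
Proof. induction l; simpl; [apply Cmod_Cone | rewrite Cmod_mul, IHl; reflexivity]. Qed.

Lemma Cmod_sum_le (x : vec) l : Cmod (Csum_list (map x l)) <= sumL l (fun j => Cmod (x j)).
Proof.
  induction l; simpl.
  - unfold Cmod, Czero; simpl. replace (0 * 0 + 0 * 0) with 0 by ring. rewrite sqrt_0; lra.
  - eapply Rle_trans; [apply Cmod_triangle | lra].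
Qed.

Lemma fst_Csum (f : vec) l : fst (Csum_list (map f l)) = sumL l (fun j => fst (f j)).
Proof. induction l; simpl; auto. rewrite IHl; auto. Qed.

Lemma snd_Csum (f : vec) l : snd (Csum_list (map f l)) = sumL l (fun j => snd (f j)).
Proof. induction l; simpl; auto. rewrite IHl; auto. Qed.

Lemma Cmul_Csum k (x : vec) l :
  Cmul k (Csum_list (map x l)) = Csum_list (map (fun i => Cmul k (x i)) l).
Proof. induction l; simpl; [apply Cx_eq; unfold Cmul, Czero; simpl; ring | rewrite <- IHl; ring]. Qed.

(** * Weights and the weighted AM–GM inequality *)

(* [wgt js i] is the relative multiplicity of [i] in [js]; these are the moduli of the
   coordinates of the extremal vector [target js c]. *)
Definition wgt (js : list nat) (i : nat) : R :=
  INR (count_occ Nat.eq_dec js i) / INR (length js).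

(* [Pstar js] = prod_k wgt(j_k), the maximum of |prod_k x_{j_k}| on the unit ball. *)
Definition Pstar (js : list nat) : R := prodL js (wgt js).

Lemma wgt_nonneg js i : 0 <= wgt js i.
Proof.
  unfold wgt. destruct js as [|j js]; [simpl; unfold Rdiv; rewrite Rinv_0; lra|].
  apply Rmult_le_pos; [apply pos_INR | left; apply Rinv_0_lt_compat, lt_0_INR; simpl; lia].
Qed.

Lemma wgt_pos js i : In i js -> 0 < wgt js i.
Proof.
  intros Hi. unfold wgt. apply Rdiv_lt_0_compat; apply lt_0_INR.
  - apply count_occ_In; auto.
  - destruct js; simpl in *; [contradiction | lia].
Qed.

Lemma wgt_notin js i : ~ In i js -> wgt js i = 0.
Proof. intros Hi. unfold wgt. rewrite (proj1 (count_occ_not_In _ _ _) Hi). simpl. lra. Qed.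

Lemma Pstar_nonneg js : 0 <= Pstar js.
Proof. apply prodL_nonneg; intros; apply wgt_nonneg. Qed.

Lemma sumL_wgt js : (1 <= length js)%nat -> sumL (nodup Nat.eq_dec js) (wgt js) = 1.
Proof.
  intros Hm. assert (0 < INR (length js)) by (apply lt_0_INR; lia).
  pose proof (sumL_count js (fun _ => 1)) as Hc. rewrite sumL_one in Hc.
  unfold wgt. rewrite (sumL_ext _ _ (fun i => / INR (length js) * (INR (count_occ Nat.eq_dec js i) * 1))).
  - rewrite sumL_scal, <- Hc. field. lra.
  - intros; unfold Rdiv; ring.
Qed.

(* sum_k u(j_k) / wgt(j_k) = m * sum_{i distinct} u(i): each distinct index occurs wgt*m times. *)
Lemma sumL_div_wgt js u : (1 <= length js)%nat ->
  sumL js (fun i => u i / wgt js i) = INR (length js) * sumL (nodup Nat.eq_dec js) u.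
Proof.
  intros Hm. rewrite sumL_count, <- sumL_scal. apply sumL_ext. intros i Hi.
  apply nodup_In in Hi. pose proof (wgt_pos js i Hi). unfold wgt in *.
  assert (0 < INR (count_occ Nat.eq_dec js i)) by (apply lt_0_INR, count_occ_In; auto).
  assert (0 < INR (length js)) by (apply lt_0_INR; lia). field. lra.
Qed.

Lemma tangent_le u w : 0 < w -> u <= w * exp (u / w - 1).
Proof.
  intros Hw. pose proof (exp_ineq1_le (u / w - 1)).
  replace u with (w * (1 + (u / w - 1))) at 1 by (field; lra). apply Rmult_le_compat_l; lra.
Qed.

Lemma tangent_eq u w : 0 < w -> u = w * exp (u / w - 1) -> u = w.
Proof.
  intros Hw Heq. destruct (Req_dec (u / w - 1) 0) as [H0|H0].
  - replace u with (w * (u / w)) by (field; lra). replace (u / w) with 1 by lra. ring.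
  - pose proof (exp_ineq1 _ H0).
    assert (u = w * (1 + (u / w - 1))) by (field; lra). nra.
Qed.

Lemma exp_le_1 t : t <= 0 -> exp t <= 1.
Proof.
  intros Ht. rewrite <- exp_0. destruct (Rle_lt_or_eq_dec _ _ Ht) as [h|h];
    [left; apply exp_increasing | right; f_equal]; auto.
Qed.

(* Multiplying the tangent bounds: if sum_{i distinct} u_i <= 1 then
   prod_k wgt(j_k) e^(u(j_k)/wgt(j_k) - 1) = Pstar * e^(m (sum u - 1)) <= Pstar. *)
Lemma tangent_product_le js u : (1 <= length js)%nat ->
  sumL (nodup Nat.eq_dec js) u <= 1 ->
  prodL js (fun i => wgt js i * exp (u i / wgt js i - 1)) <= Pstar js.
Proof.
  intros Hm Hs. unfold Pstar. rewrite prodL_mult, prodL_exp.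
  rewrite (sumL_ext _ _ (fun i => u i / wgt js i + (-1) * 1)) by (intros; ring).
  rewrite sumL_plus, sumL_div_wgt, sumL_scal, sumL_one by auto.
  pose proof (pos_INR (length js)). pose proof (Pstar_nonneg js). unfold Pstar in *.
  assert (exp (INR (length js) * sumL (nodup Nat.eq_dec js) u + -1 * INR (length js)) <= 1)
    by (apply exp_le_1; nra).
  nra.
Qed.

Lemma weighted_amgm js u : (1 <= length js)%nat -> (forall i, 0 <= u i) ->
  sumL (nodup Nat.eq_dec js) u <= 1 ->
  prodL js u <= Pstar js /\ (prodL js u = Pstar js -> forall i, In i js -> u i = wgt js i).
Proof.
  intros Hm Hu Hs.
  set (f := fun i => wgt js i * exp (u i / wgt js i - 1)).
  assert (Hf : forall i, In i js -> 0 <= u i <= f i) by (intros; split; [|apply tangent_le, wgt_pos]; auto).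
  assert (Hfpos : forall i, In i js -> 0 < f i)
    by (intros; apply Rmult_lt_0_compat; [apply wgt_pos; auto | apply exp_pos]).
  assert (Hpf : prodL js f <= Pstar js) by (apply tangent_product_le; auto).
  assert (Hpu : prodL js u <= prodL js f) by (apply prodL_le; auto).
  split; [lra|]. intros Heq i Hi.
  apply tangent_eq; [apply wgt_pos; auto|].
  apply (prodL_eq_termwise js u f Hf Hfpos); auto. lra.
Qed.

(** * The polynomial Q on the unit ball *)

Lemma nodup_below N (js : list nat) : Forall (fun j => (j < N)%nat) js ->
  Forall (fun j => (j < N)%nat) (nodup Nat.eq_dec js).
Proof. rewrite !Forall_forall. intros H j Hj. apply H, (nodup_In Nat.eq_dec), Hj. Qed.

Lemma sumL_le_l1norm N L (x : vec) : NoDup L -> Forall (fun j => (j < N)%nat) L ->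
  sumL L (fun j => Cmod (x j)) <= l1norm N x.
Proof.
  intros HL HN. unfold l1norm. rewrite (sumR_split N L) by auto.
  assert (0 <= sumR N (fun i => if in_dec Nat.eq_dec i L then 0 else Cmod (x i))); [|lra].
  apply sumR_nonneg; intros. destruct (in_dec _ _ _); [lra | apply Cmod_ge0].
Qed.

Lemma off_support_le_l1norm N L (x : vec) i : NoDup L -> Forall (fun j => (j < N)%nat) L ->
  (i < N)%nat -> ~ In i L -> sumL L (fun j => Cmod (x j)) + Cmod (x i) <= l1norm N x.
Proof.
  intros HL HN Hi HiL. unfold l1norm. rewrite (sumR_split N L) by auto.
  pose proof (sumR_term_le N (fun k => if in_dec Nat.eq_dec k L then 0 else Cmod (x k)) i) as T.
  simpl in T. destruct (in_dec Nat.eq_dec i L); [tauto|].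
  assert (Cmod (x i) <= sumR N (fun k => if in_dec Nat.eq_dec k L then 0 else Cmod (x k))); [|lra].
  apply T; auto. intros; destruct (in_dec _ _ _); [lra | apply Cmod_ge0].
Qed.

Lemma Q_bound is_real N js x : (1 <= length js)%nat -> Forall (fun j => (j < N)%nat) js ->
  inB is_real N x ->
  Cmod (Cprod_list (map x js)) <= Pstar js /\
  Cmod (Csum_list (map x (nodup Nat.eq_dec js))) <= 1 /\
  Cmod (Q js x) <= 1 + Pstar js.
Proof.
  intros Hm HN [_ Hn].
  pose proof (sumL_le_l1norm N _ x (NoDup_nodup _ js) (nodup_below N js HN)) as HL.
  destruct (weighted_amgm js (fun j => Cmod (x j)) Hm (fun i => Cmod_ge0 _) ltac:(lra)) as [Hprod _].
  rewrite <- Cmod_prod in Hprod.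
  pose proof (Cmod_sum_le x (nodup Nat.eq_dec js)) as Hsum.
  set (S := Csum_list (map x (nodup Nat.eq_dec js))) in *.
  assert (HS : Cmod S <= 1) by lra.
  split; [exact Hprod | split; [exact HS|]].
  unfold Q. eapply Rle_trans; [apply Cmod_triangle|]. fold S. rewrite Cmod_pow.
  pose proof (pow_incr (Cmod S) 1 (length js) (conj (Cmod_ge0 S) HS)). rewrite pow1 in H. lra.
Qed.

Lemma RtoC_mul a b : RtoC (a * b) = Cmul (RtoC a) (RtoC b).
Proof. apply Cx_eq; unfold RtoC, Cmul; simpl; ring. Qed.

Lemma RtoC_add a b : RtoC (a + b) = Cadd (RtoC a) (RtoC b).
Proof. apply Cx_eq; unfold RtoC, Cadd; simpl; ring. Qed.

Lemma target_eq js c i : target js c i = Cmul c (RtoC (wgt js i)).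
Proof. reflexivity. Qed.

Lemma vscale_target js c : vscale c (target js Cone) = target js c.
Proof. apply functional_extensionality; intros i. unfold vscale. rewrite !target_eq. ring. Qed.

Lemma prod_target js c l :
  Cprod_list (map (target js c) l) = Cmul (Cpow c (length l)) (RtoC (prodL l (wgt js))).
Proof.
  induction l; simpl; [apply Cx_eq; unfold Cmul, RtoC, Cone; simpl; ring|].
  rewrite IHl, target_eq, RtoC_mul. ring.
Qed.

Lemma sum_target js c l : Csum_list (map (target js c) l) = Cmul c (RtoC (sumL l (wgt js))).
Proof.
  induction l; simpl; [apply Cx_eq; unfold Cmul, RtoC, Czero; simpl; ring|].
  rewrite IHl, target_eq, RtoC_add. ring.
Qed.

Lemma Q_target js c : (1 <= length js)%nat ->
  Q js (target js c) = Cmul (Cpow c (length js)) (RtoC (Pstar js + 1)).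
Proof.
  intros Hm. unfold Q. rewrite prod_target, sum_target, sumL_wgt, RtoC_add by auto.
  change (RtoC 1) with Cone. replace (Cmul c Cone) with c by ring. unfold Pstar. ring.
Qed.

Lemma Cmod_Q_target js c : (1 <= length js)%nat -> Cmod c = 1 ->
  Cmod (Q js (target js c)) = 1 + Pstar js.
Proof.
  intros Hm Hc. rewrite Q_target, Cmod_mul, Cmod_pow, Cmod_RtoC, Hc, pow1 by auto.
  pose proof (Pstar_nonneg js). rewrite Rabs_right; lra.
Qed.

Lemma target_inB is_real N js c : (1 <= length js)%nat -> Forall (fun j => (j < N)%nat) js ->
  scalar is_real c -> Cmod c = 1 -> inB is_real N (target js c).
Proof.
  intros Hm HN Hc Hc1. split; [split|].
  - intros j. unfold scalar in *. destruct is_real; auto. unfold target, Cmul, RtoC; simpl. rewrite Hc; ring.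
  - intros j Hj. rewrite target_eq, wgt_notin; [apply Cx_eq; unfold Cmul, RtoC, Czero; simpl; ring|].
    intro h. rewrite Forall_forall in HN. apply HN in h. lia.
  - assert (Hw : forall i, Cmod (target js c i) = wgt js i).
    { intros. rewrite target_eq, Cmod_mul, Cmod_RtoC, Hc1, Rabs_right; [ring | apply Rle_ge, wgt_nonneg]. }
    unfold l1norm. rewrite (sumR_ext _ _ (wgt js)) by (intros; apply Hw).
    rewrite (sumR_split N _ _ (NoDup_nodup _ js) (nodup_below N js HN)), sumL_wgt by auto.
    rewrite (sumR_ext _ _ (fun _ => 0)), sumR_zero; [lra|].
    intros i _. destruct (in_dec _ _ _) as [|Hi]; [reflexivity|].
    apply wgt_notin. intro h; apply Hi, nodup_In, h.
Qed.

Lemma pnorm_Q is_real N js : (1 <= length js)%nat -> Forall (fun j => (j < N)%nat) js ->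
  pnorm_is is_real N (Q js) (1 + Pstar js).
Proof.
  intros Hm HN. split.
  - intros t [y [Hy ->]]. apply (Q_bound is_real N js y Hm HN Hy).
  - intros b Hb. apply Hb. exists (target js Cone). split.
    + apply target_inB; auto; [unfold scalar; destruct is_real; reflexivity | apply Cmod_Cone].
    + rewrite Cmod_Q_target; auto. apply Cmod_Cone.
Qed.

(** * Where the norm is attained *)

Lemma norming_saturates is_real N js x : (1 <= length js)%nat -> Forall (fun j => (j < N)%nat) js ->
  inB is_real N x -> Cmod (Q js x) = 1 + Pstar js ->
  Cmod (Csum_list (map x (nodup Nat.eq_dec js))) = 1 /\
  prodL js (fun j => Cmod (x j)) = Pstar js.
Proof.
  intros Hm HN HB HQ.
  destruct (Q_bound is_real N js x Hm HN HB) as [HA [HS _]].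
  set (S := Csum_list (map x (nodup Nat.eq_dec js))) in *.
  set (A := Cprod_list (map x js)) in *.
  assert (HQ2 : Cmod (Q js x) <= Cmod A + Cmod S ^ length js)
    by (unfold Q; rewrite <- Cmod_pow; apply Cmod_triangle).
  assert (HS1 : Cmod S = 1).
  { destruct (Rle_lt_or_eq_dec _ _ HS) as [Hlt|]; auto.
    pose proof (pow_lt_1_compat (Cmod S) (length js) (conj (Cmod_ge0 S) Hlt) ltac:(lia)). lra. }
  rewrite HS1, pow1 in HQ2. unfold A in *. rewrite Cmod_prod in *. split; [exact HS1 | lra].
Qed.

(* If sum_{i in L} x_i has modulus 1 = sum_{i in L} |x_i|, all x_i (i in L) share the
   phase of that sum: the equality case of the triangle inequality. *)
Lemma phase_alignment L (x : vec) : Cmod (Csum_list (map x L)) = 1 ->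
  sumL L (fun j => Cmod (x j)) = 1 ->
  forall i, In i L -> x i = Cmul (Csum_list (map x L)) (RtoC (Cmod (x i))).
Proof.
  set (S := Csum_list (map x L)). intros HS1 Hsum i Hi.
  pose proof (Cmod_sq S) as HS2. rewrite HS1 in HS2.
  assert (Hre : sumL L (fun j => fst (Cmul (Cconj S) (x j))) = 1).
  { rewrite <- fst_Csum, <- Cmul_Csum. fold S. unfold Cmul, Cconj; simpl. lra. }
  assert (Hle : forall j, In j L -> fst (Cmul (Cconj S) (x j)) <= Cmod (x j)).
  { intros j _. eapply Rle_trans; [apply re_conj_mul_le | rewrite HS1; lra]. }
  apply aligned_with_phase; auto.
  apply (sumL_eq_termwise L _ _ Hle); [lra | exact Hi].
Qed.

Lemma norming_is_target is_real N js x : (1 <= length js)%nat -> Forall (fun j => (j < N)%nat) js ->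
  inB is_real N x -> Cmod (Q js x) = 1 + Pstar js ->
  exists c, scalar is_real c /\ Cmod c = 1 /\ x = target js c.
Proof.
  intros Hm HN HB HQ.
  destruct (norming_saturates is_real N js x Hm HN HB HQ) as [HS1 Hprod].
  set (L := nodup Nat.eq_dec js) in *. set (S := Csum_list (map x L)) in *.
  destruct HB as [[Hsc Hzero] Hn].
  assert (HLN := nodup_below N js HN). fold L in HLN.
  pose proof (sumL_le_l1norm N L x (NoDup_nodup _ js) HLN) as HLe.
  destruct (weighted_amgm js (fun j => Cmod (x j)) Hm (fun i => Cmod_ge0 _)) as [_ Hwgt];
    [fold L; lra|].
  specialize (Hwgt Hprod).
  assert (Hsum : sumL L (fun j => Cmod (x j)) = 1).
  { rewrite (sumL_ext _ _ (wgt js)); [apply sumL_wgt; auto|].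
    intros i Hi. apply Hwgt, (nodup_In Nat.eq_dec), Hi. }
  exists S. split; [|split; auto].
  { unfold scalar in *. destruct is_real; auto. unfold S. rewrite snd_Csum.
    rewrite (sumL_ext _ _ (fun _ => 0 * 1)), sumL_scal; [ring | intros; rewrite Hsc; ring]. }
  apply functional_extensionality. intros i. rewrite target_eq.
  destruct (in_dec Nat.eq_dec i L) as [Hi|Hi].
  - rewrite <- (Hwgt i) by (apply (nodup_In Nat.eq_dec), Hi). apply phase_alignment; auto.
  - assert (Hni : ~ In i js) by (intro h; apply Hi, nodup_In, h).
    rewrite wgt_notin by auto.
    replace (Cmul S (RtoC 0)) with Czero by (apply Cx_eq; unfold Cmul, RtoC, Czero; simpl; ring).
    destruct (le_lt_dec N i) as [HiN|HiN]; [apply Hzero; auto|].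
    pose proof (off_support_le_l1norm N L x i (NoDup_nodup _ js) HLN HiN Hi).
    apply Cmod_eq0. pose proof (Cmod_ge0 (x i)). lra.
Qed.

Lemma norming_iff_target is_real N js x : (1 <= length js)%nat -> Forall (fun j => (j < N)%nat) js ->
  inB is_real N x ->
  (pnorm_is is_real N (Q js) (Cmod (Q js x)) <->
   exists c, scalar is_real c /\ Cmod c = 1 /\ x = target js c).
Proof.
  intros Hm HN HB. split.
  - intros H. apply (norming_is_target is_real N); auto.
    eapply is_lub_u; eauto. apply pnorm_Q; auto.
  - intros [c [Hc [Hc1 ->]]]. rewrite Cmod_Q_target; auto. apply pnorm_Q; auto.
Qed.

(** * Subsequences and compactness of the unit ball *)

Definition incr (phi : nat -> nat) : Prop := forall n, (phi n < phi (S n))%nat.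

Lemma incr_mono phi : incr phi -> forall m n, (m < n)%nat -> (phi m < phi n)%nat.
Proof. intros H m n Hmn. induction Hmn; [apply H | pose proof (H m0); lia]. Qed.

Lemma incr_ge phi : incr phi -> forall n, (n <= phi n)%nat.
Proof. intros H n. induction n; [lia | pose proof (H n); lia]. Qed.

Lemma incr_comp phi psi : incr phi -> incr psi -> incr (fun n => phi (psi n)).
Proof. intros H1 H2 n. apply incr_mono; auto. Qed.

Lemma cv_const c : Un_cv (fun _ => c) c.
Proof. intros e He. exists 0%nat. intros. unfold Rdist. rewrite Rminus_diag, Rabs_R0. lra. Qed.

Lemma subseq_cv u l phi : incr phi -> Un_cv u l -> Un_cv (fun n => u (phi n)) l.
Proof.
  intros Hp Hu e He. destruct (Hu e He) as [N HN]. exists N. intros n Hn. apply HN.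
  pose proof (incr_ge phi Hp n). lia.
Qed.

(* [build g n] = g n (1 + build g (n-1)): at stage n choose an index (via [g n]) beyond the
   previous one, which yields an increasing selection when [g n k >= k]. *)
Fixpoint build (g : nat -> nat -> nat) (n : nat) : nat :=
  match n with O => g O O | S n' => g n (S (build g n')) end.

Lemma adherence_subseq un l : ValAdh un l -> exists phi, incr phi /\ Un_cv (fun n => un (phi n)) l.
Proof.
  intros H.
  assert (Hex : forall k N, exists p, (N <= p)%nat /\ Rabs (un p - l) < / (INR k + 1)).
  { intros k N. assert (Hd : 0 < / (INR k + 1)) by (apply Rinv_0_lt_compat; pose proof (pos_INR k); lra).
    destruct (H (disc l (mkposreal _ Hd)) N) as [p [Hp Hv]].
    - exists (mkposreal _ Hd). intros y Hy; exact Hy.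
    - exists p; split; auto. }
  set (g := fun k N => proj1_sig (constructive_indefinite_description _ (Hex k N))).
  assert (Hg : forall k N, (N <= g k N)%nat /\ Rabs (un (g k N) - l) < / (INR k + 1)).
  { intros. unfold g. destruct (constructive_indefinite_description _ _). simpl. auto. }
  exists (build g). split.
  - intros n. simpl. destruct (Hg (S n) (S (build g n))). lia.
  - intros e He. destruct (INR_unbounded (/ e)) as [N HN]. exists N. intros n Hn.
    unfold Rdist.
    assert (Rabs (un (build g n) - l) < / (INR n + 1)) by (destruct n; simpl; apply Hg).
    eapply Rlt_le_trans; [eassumption|].
    assert (INR N <= INR n) by (apply le_INR; lia).
    pose proof (pos_INR N). assert (0 < / e) by (apply Rinv_0_lt_compat; auto).
    rewrite <- (Rinv_inv e). apply Rinv_le_contravar; lra.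
Qed.

Lemma BW_multi K (F : nat -> nat -> R) : (forall n k, (k < K)%nat -> Rabs (F n k) <= 1) ->
  exists phi, incr phi /\
  exists Lim : nat -> R, forall k, (k < K)%nat -> Un_cv (fun n => F (phi n) k) (Lim k).
Proof.
  induction K; intros HF.
  - exists (fun n => n). split; [intros n; lia | exists (fun _ => 0); intros; lia].
  - destruct IHK as [phi [Hphi [Lim HL]]]; [intros; apply HF; lia|].
    destruct (Bolzano_Weierstrass (fun n => F (phi n) K) (fun c => -1 <= c <= 1) (compact_P3 (-1) 1))
      as [l Hl].
    { intros n. pose proof (HF (phi n) K ltac:(lia)). simpl. unfold Rabs in H; destruct (Rcase_abs _); lra. }
    destruct (adherence_subseq _ _ Hl) as [psi [Hpsi Hcv]].
    exists (fun n => phi (psi n)). split; [apply incr_comp; auto|].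
    exists (fun k => if Nat.eq_dec k K then l else Lim k). intros k Hk.
    destruct (Nat.eq_dec k K); [subst; auto|].
    apply (subseq_cv (fun n => F (phi n) k)); auto. apply HL; lia.
Qed.

(** * Continuity *)

Definition Ccv (zs : nat -> Cx) (z : Cx) : Prop :=
  Un_cv (fun n => fst (zs n)) (fst z) /\ Un_cv (fun n => snd (zs n)) (snd z).

Lemma Ccv_const z : Ccv (fun _ => z) z.
Proof. split; apply cv_const. Qed.

Lemma Ccv_add zs ws z w : Ccv zs z -> Ccv ws w -> Ccv (fun n => Cadd (zs n) (ws n)) (Cadd z w).
Proof. intros [] []; split; simpl; apply CV_plus; auto. Qed.

Lemma Ccv_sub zs ws z w : Ccv zs z -> Ccv ws w -> Ccv (fun n => Csub (zs n) (ws n)) (Csub z w).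
Proof. intros [] []; split; simpl; apply CV_minus; auto. Qed.

Lemma Ccv_mul zs ws z w : Ccv zs z -> Ccv ws w -> Ccv (fun n => Cmul (zs n) (ws n)) (Cmul z w).
Proof. intros [] []; split; simpl; [apply CV_minus | apply CV_plus]; apply CV_mult; auto. Qed.

Lemma Ccv_pow zs z k : Ccv zs z -> Ccv (fun n => Cpow (zs n) k) (Cpow z k).
Proof. intros. induction k; simpl; [apply Ccv_const | apply Ccv_mul; auto]. Qed.

Lemma Cmod_cv zs z : Ccv zs z -> Un_cv (fun n => Cmod (zs n)) (Cmod z).
Proof.
  intros [H1 H2]. unfold Cmod.
  apply (continuity_seq sqrt (fun n => fst (zs n) * fst (zs n) + snd (zs n) * snd (zs n))).
  - apply continuity_pt_sqrt. nra.
  - apply CV_plus; apply CV_mult; auto.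
Qed.

Lemma Ccv_Q (xs : nat -> vec) (y : vec) js : (forall j, Ccv (fun n => xs n j) (y j)) ->
  Ccv (fun n => Q js (xs n)) (Q js y).
Proof.
  intros Hy. unfold Q. apply Ccv_add.
  - induction js; simpl; [apply Ccv_const | apply Ccv_mul; auto].
  - apply Ccv_pow. induction (nodup Nat.eq_dec js); simpl; [apply Ccv_const | apply Ccv_add; auto].
Qed.

Lemma sumR_cv N (f : nat -> nat -> R) g : (forall j, (j < N)%nat -> Un_cv (fun n => f n j) (g j)) ->
  Un_cv (fun n => sumR N (f n)) (sumR N g).
Proof. induction N; intros; simpl; [apply cv_const | apply CV_plus; auto]. Qed.

Lemma l1norm_dist_cv N (xs : nat -> vec) (y : vec) : (forall j, Ccv (fun n => xs n j) (y j)) ->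
  Un_cv (fun n => l1norm N (vsub (xs n) y)) 0.
Proof.
  intros Hy. replace 0 with (sumR N (fun j => Cmod (Csub (y j) (y j)))).
  - apply sumR_cv. intros j _. apply Cmod_cv, Ccv_sub; [apply Hy | apply Ccv_const].
  - rewrite (sumR_ext _ _ (fun _ => 0)), sumR_zero; [reflexivity|].
    intros j _. replace (Csub (y j) (y j)) with Czero by ring.
    unfold Cmod, Czero; simpl. replace (0 * 0 + 0 * 0) with 0 by ring. apply sqrt_0.
Qed.

Lemma ball_subseq_limit is_real N (xs : nat -> vec) : (forall n, inB is_real N (xs n)) ->
  exists phi, incr phi /\ exists y, inB is_real N y /\
    forall j, Ccv (fun n => xs (phi n) j) (y j).
Proof.
  intros Hxs.
  assert (Hbd : forall n j, (j < N)%nat -> Cmod (xs n j) <= 1).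
  { intros n j Hj. destruct (Hxs n) as [_ Hn]. eapply Rle_trans; [|exact Hn].
    apply (sumR_term_le N (fun j => Cmod (xs n j))); auto. intros; apply Cmod_ge0. }
  destruct (BW_multi N (fun n k => fst (xs n k))) as [phi1 [Hp1 [L1 HL1]]].
  { intros. eapply Rle_trans; [apply Cmod_fst_abs | apply Hbd; auto]. }
  destruct (BW_multi N (fun n k => snd (xs (phi1 n) k))) as [phi2 [Hp2 [L2 HL2]]].
  { intros. eapply Rle_trans; [apply Cmod_snd_abs | apply Hbd; auto]. }
  set (phi := fun n => phi1 (phi2 n)).
  set (y := fun j => if lt_dec j N then (L1 j, L2 j) else Czero).
  assert (Hy : forall j, Ccv (fun n => xs (phi n) j) (y j)).
  { intros j. unfold y. destruct (lt_dec j N).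
    - split; simpl; [apply (subseq_cv (fun n => fst (xs (phi1 n) j))) | apply HL2]; auto.
    - replace (fun n => xs (phi n) j) with (fun _ : nat => Czero); [apply Ccv_const|].
      apply functional_extensionality; intros k. destruct (Hxs (phi k)) as [[_ Hz] _].
      rewrite Hz; auto; lia. }
  exists phi. split; [exact (incr_comp _ _ Hp1 Hp2)|]. exists y. split; [|exact Hy].
  split; [split|].
  - intros j. unfold scalar. destruct is_real eqn:Er; auto.
    apply (UL_sequence (fun n => snd (xs (phi n) j))); [apply (proj2 (Hy j))|].
    replace (fun n => snd (xs (phi n) j)) with (fun _ : nat => 0); [apply cv_const|].
    apply functional_extensionality; intros n. destruct (Hxs (phi n)) as [[Hs _] _].
    symmetry; exact (Hs j).
  - intros j Hj. unfold y. destruct (lt_dec j N); [lia | reflexivity].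
  - apply Rle_cv_lim with (Un := fun n => l1norm N (xs (phi n))) (Vn := fun _ => 1).
    + intros n. apply (Hxs (phi n)).
    + apply sumR_cv. intros. apply Cmod_cv; auto.
    + apply cv_const.
Qed.

(* A maximizing
   sequence has a subsequence converging to a norming point, which by
   [norming_iff_target] is c (1/m) sum_k e_{j_k} with |c| = 1. *)
Lemma strongly_attains_Q is_real N js : (1 <= length js)%nat -> Forall (fun j => (j < N)%nat) js ->
  strongly_attains is_real N (Q js) (target js Cone).
Proof.
  intros Hm HN.
  assert (HT : inB is_real N (target js Cone))
    by (apply target_inB; auto; [unfold scalar; destruct is_real; reflexivity | apply Cmod_Cone]).
  split; [|split; [exact HT|]].
  { exists (target js Cone). split; [apply HT|]. intros H0.
    pose proof (Cmod_Q_target js Cone Hm Cmod_Cone) as HQ. rewrite H0 in HQ.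
    replace (Cmod Czero) with 0 in HQ by (rewrite <- (Rabs_R0), <- Cmod_RtoC; reflexivity).
    pose proof (Pstar_nonneg js). lra. }
  intros r Hr xs Hxs Hcv.
  assert (Hr1 : r = 1 + Pstar js) by (eapply is_lub_u; eauto; apply pnorm_Q; auto).
  destruct (ball_subseq_limit is_real N xs Hxs) as [phi [Hp [y [HyB Hy]]]].
  assert (HQy : Cmod (Q js y) = r).
  { apply (UL_sequence (fun n => Cmod (Q js (xs (phi n))))).
    - apply Cmod_cv, Ccv_Q; auto.
    - apply (subseq_cv (fun n => Cmod (Q js (xs n)))); auto. }
  destruct (proj1 (norming_iff_target is_real N js y Hm HN HyB)) as [c [Hc [Hc1 Hyc]]].
  { rewrite HQy, Hr1. apply pnorm_Q; auto. }
  exists c. split; [exact Hc | split; [exact Hc1|]]. exists phi. split; [exact Hp|].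
  rewrite vscale_target, <- Hyc. apply l1norm_dist_cv, Hy.
Qed.

Theorem lemma4p4 (is_real : bool) (N m : nat) (js : list nat) :
  (1 <= m)%nat -> length js = m -> Forall (fun j => (j < N)%nat) js ->
  (forall x : vec, inB is_real N x ->
     (pnorm_is is_real N (Q js) (Cmod (Q js x)) <->
      exists c : Cx, scalar is_real c /\ Cmod c = 1 /\ x = target js c)) /\
  strongly_attains is_real N (Q js) (target js Cone).
Proof.
  intros Hm Hlen HN. subst m. split.
  - intros x Hx. apply norming_iff_target; auto.
  - apply strongly_attains_Q; auto.
Qed.
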